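(* Consider the 2-node network game with $\pi^M=W_{con}$, $a_1=a_2=a>0$, $c_1=c_2=c>0$, $b_1>b_2>0$, and line capacity $f_{12}\ge a/(b_2+2c)$ (possibly $f_{12}=\infty$). Then the following triple is a GNE: $$q_2^*=r^*=\frac{a}{b_2+2c},\qquad q_1^*=\begin{cases}\dfrac{a(2c+b_2-b_1)}{2(b_1+c)(b_2+2c)}, & \text{if } b_1<b_2+2c,\\[2mm] 0, & \text{otherwise}.\end{cases}$$
   Context: 2-node network game. There are generators $G_1,G_2$. Generator $k$ chooses $q_k\ge 0$ and has profit $\pi^G_k=q_kp_k(q_k+r_k)-c_kq_k^2$, where $p_k(d)=a_k-b_kd$. The market maker chooses $r\in\mathbb{R}$ and sets $r_1=r$, $r_2=-r$, subject to $-q_1\le r\le q_2$ and $-f_{12}\le r\le f_{12}$. Consumer surplus objective. The market maker maximizes $$W_{con}(q,r)=\sum_k\Big(\int_0^{q_k+r_k}p_k(w)dw-(q_k+r_k)p_k(q_k+r_k)\Big).$$ GNE. A triple $(q_1^*,q_2^*,r^* )$ with $r^*$ feasible given $q^*$ is a GNE if both of the following hold: - each $q_k^*$ maximizes $\pi^G_k$ over $q_k\ge0$, given the other generator's quantity and $r^*$; - $r^*$ maximizes $W_{con}(q^*,\cdot)$ over the feasible set determined by $q^*$. *)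

From Stdlib Require Import Reals.
Open Scope R_scope.

Definition price (a b d : R) : R := a - b * d.

Definition gen_profit (a b c q rk : R) : R :=
  q * price a b (q + rk) - c * q ^ 2.

Definition price_integral (a b d : R) : R := a * d - b * d ^ 2 / 2.

Definition node_surplus (a b d : R) : R :=
  price_integral a b d - d * price a b d.

(* W_con(q, r) with r_1 = r, r_2 = -r *)
Definition W_con (a1 b1 a2 b2 q1 q2 r : R) : R :=
  node_surplus a1 b1 (q1 + r) + node_surplus a2 b2 (q2 + - r).

(* Line capacity: [Some f] is a finite capacity f, [None] means f_12 = infinity. *)
Definition feasible (f12 : option R) (q1 q2 r : R) : Prop :=
  - q1 <= r <= q2 /\
  match f12 with Some f => - f <= r <= f | None => True end.

Definition is_GNE (a1 b1 c1 a2 b2 c2 : R) (f12 : option R) (q1 q2 r : R) : Prop :=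
  feasible f12 q1 q2 r /\
  0 <= q1 /\ 0 <= q2 /\
  (forall q, 0 <= q -> gen_profit a1 b1 c1 q r <= gen_profit a1 b1 c1 q1 r) /\
  (forall q, 0 <= q -> gen_profit a2 b2 c2 q (- r) <= gen_profit a2 b2 c2 q2 (- r)) /\
  (forall r', feasible f12 q1 q2 r' ->
     W_con a1 b1 a2 b2 q1 q2 r' <= W_con a1 b1 a2 b2 q1 q2 r).

(* A generator's profit is concave in its own
   quantity, so its best response to the flow r_k is the clipped stationary
   point max(0, (a - b r_k) / (2 (b + c))); with r* = q_2* = a/(b_2 + 2c) one
   checks that q_1* and q_2* are exactly these clipped points.  Consumer surplus
   at a node is b d^2 / 2, so W_con is convex in r and its maximum over the
   interval [-q_1, q_2] sits at an endpoint; the steeper demand at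
   node 1 (b_1 > b_2) makes the export endpoint r = q_2 the better one. *)

From Stdlib Require Import Reals Lra Psatz.
Open Scope R_scope.

Lemma node_surplus_eq (a b d : R) : node_surplus a b d = b * d ^ 2 / 2.
Proof. unfold node_surplus, price_integral, price; field. Qed.

Lemma gen_profit_eq (a b c q rk : R) :
  gen_profit a b c q rk = q * (a - b * rk) - (b + c) * q ^ 2.
Proof. unfold gen_profit, price; ring. Qed.

Definition best_response (a b c rk : R) : R :=
  Rmax 0 ((a - b * rk) / (2 * (b + c))).

Lemma best_response_nonneg (a b c rk : R) : 0 <= best_response a b c rk.
Proof. apply Rmax_l. Qed.

Lemma gen_profit_le_best_response (a b c rk q : R) :
  0 < b + c -> 0 <= q ->
  gen_profit a b c q rk <= gen_profit a b c (best_response a b c rk) rk.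
Proof.
  intros Hbc Hq; unfold best_response, Rmax.
  rewrite !gen_profit_eq.
  set (s := a - b * rk).
  destruct (Rle_dec 0 (s / (2 * (b + c)))) as [Hs | Hs].
  - set (q' := s / (2 * (b + c))).
    assert (Es : s = 2 * (b + c) * q') by (unfold q'; field; lra).
    assert (0 <= (b + c) * (q - q') ^ 2) by (apply Rmult_le_pos; [lra | apply pow2_ge_0]).
    rewrite Es; nra.
  - assert (Hs0 : s <= 0).
    { destruct (Rle_dec s 0) as [? | Hpos]; [assumption |].
      exfalso; apply Hs, Rle_mult_inv_pos; lra. }
    nra.
Qed.

Lemma W_con_le_export (a1 b1 a2 b2 q1 q2 r : R) :
  b2 <= b1 -> 0 <= b1 -> - q1 <= r <= q2 ->
  W_con a1 b1 a2 b2 q1 q2 r <= W_con a1 b1 a2 b2 q1 q2 q2.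
Proof.
  intros Hb Hb1 [Hlo Hhi]; unfold W_con; rewrite !node_surplus_eq.
  assert (0 <= (b1 - b2) * (q2 - r) ^ 2) by (apply Rmult_le_pos; [lra | apply pow2_ge_0]).
  assert (0 <= b1 * ((q1 + r) * (q2 - r))) by (apply Rmult_le_pos; nra).
  (* the gap is ((b1 - b2) (q2 - r)^2 + 2 b1 (q1 + r) (q2 - r)) / 2 *)
  nra.
Qed.

Theorem mainTheorem5 (a c b1 b2 : R) (f12 : option R) :
  0 < a -> 0 < c -> 0 < b2 -> b2 < b1 ->
  match f12 with Some f => a / (b2 + 2 * c) <= f | None => True end ->
  is_GNE a b1 c a b2 c f12
    (if Rlt_dec b1 (b2 + 2 * c)
     then a * (2 * c + b2 - b1) / (2 * (b1 + c) * (b2 + 2 * c))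
     else 0)
    (a / (b2 + 2 * c))
    (a / (b2 + 2 * c)).
Proof.
  intros Ha Hc Hb2 Hb Hf.
  set (Q := a / (b2 + 2 * c)).
  assert (HQ : 0 < Q) by (apply Rdiv_lt_0_compat; lra).
  set (q1 := if Rlt_dec b1 (b2 + 2 * c) then _ else 0).
  assert (Eq1 : q1 = best_response a b1 c Q).
  { unfold q1, best_response, Q.
    replace ((a - b1 * (a / (b2 + 2 * c))) / (2 * (b1 + c)))
      with (a * (2 * c + b2 - b1) / (2 * (b1 + c) * (b2 + 2 * c))) by (field; lra).
    destruct (Rlt_dec b1 (b2 + 2 * c)) as [Hlt | Hge].
    - rewrite Rmax_right; [reflexivity |].
      apply Rle_mult_inv_pos; nra.
    - rewrite Rmax_left; [reflexivity |].
      assert (0 <= a * (b1 - (2 * c + b2)) / (2 * (b1 + c) * (b2 + 2 * c)))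
        by (apply Rle_mult_inv_pos; nra).
      unfold Rdiv in *; nra. }
  assert (Eq2 : Q = best_response a b2 c (- Q)).
  { unfold best_response; rewrite Rmax_right.
    - unfold Q; field; lra.
    - apply Rle_mult_inv_pos; nra. }
  assert (Hq1 : 0 <= q1) by (rewrite Eq1; apply best_response_nonneg).
  assert (Hfeas : feasible f12 q1 Q Q).
  { split; [lra |]. destruct f12; [fold Q in Hf; lra | exact I]. }
  split; [exact Hfeas |].
  split; [exact Hq1 |].
  split; [lra |].
  split; [| split].
  - intros q Hq; rewrite Eq1; apply gen_profit_le_best_response; lra.
  - intros q Hq; rewrite Eq2 at 2; apply gen_profit_le_best_response; lra.
  - intros r' [Hr' _]; apply W_con_le_export; lra.
Qed.
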